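(* If $\mathcal D$ is a probabilistic database with the finite moments property and $\Phi$ is an FO-view over the schema of $\mathcal D$, then $\Phi(\mathcal D)$ also has the finite moments property.
   Context: Fix a countably infinite universe $U$. A database schema is a finite nonempty set of relation symbols with arities; facts are $R(u_1,\dots,u_{\mathrm{ar}(R)})$ with $u_i\in U$; an instance is a finite set of facts ($|D|$ = number of facts); $\mathrm{adom}(D)$ is the set of elements of $U$ occurring in $D$. A probabilistic database (PDB) is a discrete probability space $(\mathbb D,P)$ with $\mathbb D$ a nonempty countable set of instances. It has the finite moments property if $\sum_{D\in\mathbb D}|D|^kP(\{D\})<\infty$ for all $k\in\mathbb N_+$. An FO-view consists of one first-order formula $\Phi_R(x_1,\dots,x_{\mathrm{ar}(R)})$ (constants from $U$ allowed) per output relation symbol $R$, evaluated under active domain semantics (quantifiers range over $\mathrm{adom}(D)$ and the formula's constants), mapping $D$ to the instance containing $R(\bar a)$ for all $\bar a$ over $\mathrm{adom}(D)\cup\mathrm{adom}(\Phi_R)$ with $D\models\Phi_R[\bar a]$. The image $\Phi(\mathcal D)$ of a PDB $(\mathbb D,P)$ is the PDB on $\Phi(\mathbb D)$ with $P'(\{D'\})=P(\{D:\Phi(D)=D'\})$. *)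

From HB Require Import structures.
From mathcomp Require Import all_boot all_order all_algebra finmap.
From mathcomp Require Import all_classical all_reals all_analysis.

Set Implicit Arguments.
Unset Strict Implicit.
Unset Printing Implicit Defensive.

Import Order.TTheory GRing.Theory Num.Theory.

(* The universe U is fixed to be nat (a countably infinite set). *)

Record schema := Schema { sym : finType; ar : sym -> nat }.

Definition fact (S : schema) : Type := {R : sym S & (ar R).-tuple nat}.

Definition inst (S : schema) : Type := {fset fact S}.

Definition inst_size (S : schema) (D : inst S) : nat := #|` D|.

Definition adom (S : schema) (D : inst S) : seq nat :=
  flatten [seq tval (tagged f) | f <- enum_fset D].

Inductive term := TVar of nat | TConst of nat.

Inductive formula (S : schema) :=
  | FAtom (R : sym S) of (ar R).-tuple term
  | FEq of term & term
  | FTrue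
  | FFalse
  | FNot of formula S
  | FAnd of formula S & formula S
  | FOr of formula S & formula S
  | FImp of formula S & formula S
  | FExists of nat & formula S
  | FForall of nat & formula S.

Arguments FTrue {S}.
Arguments FFalse {S}.

Definition term_vars (t : term) : seq nat :=
  match t with TVar i => [:: i] | TConst _ => [::] end.
Definition term_consts (t : term) : seq nat :=
  match t with TVar _ => [::] | TConst c => [:: c] end.

Fixpoint fv (S : schema) (f : formula S) : seq nat :=
  match f with
  | FAtom _ ts => flatten [seq term_vars t | t <- tval ts]
  | FEq t1 t2 => term_vars t1 ++ term_vars t2
  | FTrue | FFalse => [::]
  | FNot g => fv g
  | FAnd g h | FOr g h | FImp g h => fv g ++ fv h
  | FExists x g | FForall x g => [seq y <- fv g | y != x]
  end.

Fixpoint consts (S : schema) (f : formula S) : seq nat :=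
  match f with
  | FAtom _ ts => flatten [seq term_consts t | t <- tval ts]
  | FEq t1 t2 => term_consts t1 ++ term_consts t2
  | FTrue | FFalse => [::]
  | FNot g => consts g
  | FAnd g h | FOr g h | FImp g h => consts g ++ consts h
  | FExists _ g | FForall _ g => consts g
  end.

Definition teval (e : nat -> nat) (t : term) : nat :=
  match t with TVar i => e i | TConst c => c end.

Definition upd (e : nat -> nat) (x u : nat) : nat -> nat :=
  fun y => if y == x then u else e y.

Fixpoint sat (S : schema) (A : seq nat) (D : inst S) (e : nat -> nat)
    (f : formula S) : bool :=
  match f with
  | FAtom R ts =>
      (existT (fun R0 : sym S => (ar R0).-tuple nat) R (map_tuple (teval e) ts)
        : fact S) \in D
  | FEq t1 t2 => teval e t1 == teval e t2
  | FTrue => true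
  | FFalse => false
  | FNot g => ~~ sat A D e g
  | FAnd g h => sat A D e g && sat A D e h
  | FOr g h => sat A D e g || sat A D e h
  | FImp g h => sat A D e g ==> sat A D e h
  | FExists x g => has (fun u => sat A D (upd e x u) g) A
  | FForall x g => all (fun u => sat A D (upd e x u) g) A
  end.

(* Active-domain satisfaction: quantifiers range over adom(D) and the
   constants of the formula. *)
Definition adom_dom (S : schema) (D : inst S) (f : formula S) : seq nat :=
  adom D ++ consts f.

Fixpoint tuples_over (A : seq nat) (n : nat) : seq (n.-tuple nat) :=
  match n with
  | 0 => [:: [tuple]]
  | n'.+1 => [seq cons_tuple a t | a <- A, t <- tuples_over A n']
  end.

(* assignment x_{i+1} |-> t_i (variables are numbered from 0) *)
Definition env_of (n : nat) (t : n.-tuple nat) : nat -> nat := fun i => nth 0 t i.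

Record fo_view (S S' : schema) := FOView {
  phi : forall R' : sym S', formula S;
  phi_fv : forall R' : sym S', all (fun i => i < ar R') (fv (phi R'))
}.

Definition view_facts (S S' : schema) (Phi : fo_view S S') (D : inst S)
    (R' : sym S') : seq (fact S') :=
  [seq existT (fun R0 : sym S' => (ar R0).-tuple nat) R' t
  | t <- tuples_over (adom_dom D (phi Phi R')) (ar R')
  & sat (adom_dom D (phi Phi R')) D (env_of t) (phi Phi R')].

Definition apply_view (S S' : schema) (Phi : fo_view S S') (D : inst S) : inst S' :=
  [fset x | x in flatten [seq view_facts Phi D R' | R' <- enum (sym S')]]%fset.

Local Open Scope classical_set_scope.
Local Open Scope ring_scope.
Local Open Scope ereal_scope.

(* A PDB given by its probability mass function on (countably many) instances *)
Definition is_pdb (R : realType) (S : schema) (P : inst S -> R) : Prop :=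
  (forall D, (0 <= P D)%R) /\ \esum_(D in [set: inst S]) (P D)%:E = 1.

Definition finite_moments (R : realType) (S : schema) (p : inst S -> \bar R) : Prop :=
  forall k : nat, (0 < k)%N ->
    \esum_(D in [set: inst S]) ((inst_size D ^ k)%:R)%:E * p D < +oo.

Definition image_pmf (R : realType) (S S' : schema) (Phi : fo_view S S')
    (P : inst S -> R) : inst S' -> \bar R :=
  fun D' => \esum_(D in [set D | apply_view Phi D = D']) (P D)%:E.

From HB Require Import structures.
From mathcomp Require Import all_boot all_order all_algebra finmap.
From mathcomp Require Import all_classical all_reals all_analysis.
From mathcomp Require Import zify.

Import Order.TTheory GRing.Theory Num.Theory.

(* An FO-view only produces facts over the active domain of D and the finitely
   many constants of its formulas, so |Phi(D)| is bounded by a polynomial in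
   |D|, and |Phi(D)|^k <= C (|D|^j + 1) for suitable C and j > 0.  Summing over
   the fibres of Phi, the k-th moment of Phi(D) is the sum of |Phi(D)|^k P(D)
   over the input instances, hence at most C times the j-th moment of D plus
   the total mass. *)

Lemma leq_exp2rW (e : nat) [m n : nat] : (m <= n)%N -> (m ^ e <= n ^ e)%N.
Proof. by move=> le_mn; elim: e => // e IHe; rewrite !expnS leq_mul. Qed.

Lemma sumn_map_leq (T : Type) (f : T -> nat) (s : seq T) (b : nat) :
  (forall x, f x <= b)%N -> (sumn (map f s) <= size s * b)%N.
Proof. by move=> fb; elim: s => //= x s IHs; rewrite mulSn leq_add. Qed.

Lemma leq_expSn (n e : nat) : (n.+1 ^ e <= 2 ^ e * (n ^ e + 1))%N.
Proof.
case: n => [|n]; first by rewrite exp1n muln_gt0 expn_gt0 addn1.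
rewrite mulnDr -expnMn (leq_trans _ (leq_addr _ _)) //.
by apply: leq_exp2rW; lia.
Qed.

Lemma size_tuples_over (A : seq nat) (n : nat) :
  size (tuples_over A n) = (size A ^ n)%N.
Proof. by elim: n => //= n IHn; rewrite size_allpairs IHn expnS. Qed.

Definition max_arity (S : schema) : nat := (\max_(R : sym S) ar R)%N.

Lemma size_adom (S : schema) (D : inst S) :
  (size (adom D) <= max_arity S * #|` D|)%N.
Proof.
rewrite /adom size_flatten /shape -map_comp mulnC.
apply: sumn_map_leq => f /=.
by rewrite size_tuple (@leq_bigmax _ (fun R => ar R)).
Qed.

Section ViewSize.
Context {S S' : schema} (Phi : fo_view S S').

Definition max_consts : nat := (\max_(R' : sym S') size (consts (phi Phi R')))%N.

Lemma size_view_facts (D : inst S) (R' : sym S') :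
  (size (view_facts Phi D R')
     <= (size (adom D) + max_consts).+1 ^ max_arity S')%N.
Proof.
rewrite /view_facts size_map size_filter (leq_trans (count_size _ _)) //.
rewrite size_tuples_over (@leq_trans ((size (adom D) + max_consts).+1 ^ ar R')) //.
  apply/leq_exp2rW/leqW; rewrite /adom_dom size_cat leq_add2l.
  exact: (@leq_bigmax _ (fun R => size (consts (phi Phi R)))).
exact/leq_pexp2l/(@leq_bigmax _ (fun R => ar R)).
Qed.

Lemma card_apply_view (D : inst S) :
  (#|` apply_view Phi D|
     <= #|sym S'| * (size (adom D) + max_consts).+1 ^ max_arity S')%N.
Proof.
rewrite /apply_view card_fseq (leq_trans (size_undup _)) // size_flatten /shape.
by rewrite -map_comp cardE; apply: sumn_map_leq => R'; apply: size_view_facts.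
Qed.

Lemma card_apply_view_poly :
  exists c, forall D : inst S,
    (#|` apply_view Phi D| <= c * #|` D|.+1 ^ max_arity S')%N.
Proof.
exists (#|sym S'| * (max_arity S + max_consts).+1 ^ max_arity S')%N => D.
rewrite (leq_trans (card_apply_view D)) // -mulnA leq_mul2l -expnMn.
by apply/orP; right; apply: leq_exp2rW; have := @size_adom S D; nia.
Qed.

Lemma card_apply_view_expn_poly (k : nat) :
  exists C j, (0 < j)%N /\
    forall D : inst S, (#|` apply_view Phi D| ^ k <= C * (#|` D| ^ j + 1))%N.
Proof.
have [c card_le] := card_apply_view_poly.
(* The exponent is m k + 1 rather than m k so that it stays positive when all
   output relations are nullary: finite_moments only controls positive moments. *)
set j := (max_arity S' * k).+1.
exists (c ^ k * 2 ^ j)%N, j; split=> // D.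
rewrite (leq_trans (leq_exp2rW k (card_le D))) // expnMn -expnM -mulnA leq_mul2l.
apply/orP; right; rewrite (leq_trans _ (leq_expSn _ _)) //.
exact: leq_pexp2l.
Qed.

End ViewSize.

Local Open Scope classical_set_scope.
Local Open Scope ring_scope.
Local Open Scope ereal_scope.

Lemma esumMn {R : realType} {T : choiceType} (I : set T) (a : T -> \bar R)
    (n : nat) :
  (forall i, I i -> 0 <= a i) ->
  \esum_(i in I) (a i *+ n) = (\esum_(i in I) a i) *+ n.
Proof.
move=> a_ge0; elim: n => [|n IHn]; first by rewrite esum1.
under eq_esum do rewrite muleS.
rewrite esumD ?IHn ?muleS // => i Ii.
by rewrite -mule_natl mule_ge0 ?a_ge0.
Qed.

Lemma esum_fibers {R : realType} {T U : choiceType} (g : T -> U)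
    (a : T -> \bar R) :
  (forall t, 0 <= a t) ->
  \esum_(u in [set: U]) \esum_(t in [set t | g t = u]) a t
  = \esum_(t in [set: T]) a t.
Proof.
move=> a_ge0; rewrite esum_esum //.
rewrite (reindex_esum [set: T] _ (fun t => (g t, t))) //; split.
- by [].
- by move=> t1 t2 _ _ [].
- by move=> [u t] [_ /= <-]; exists t.
Qed.

Lemma esum_image_pmf {R : realType} {S S' : schema} (Phi : fo_view S S')
    (P : inst S -> R) (w : inst S' -> nat) :
  (forall D, (0 <= P D)%R) ->
  \esum_(D' in [set: inst S']) (w D')%:R%:E * image_pmf Phi P D'
  = \esum_(D in [set: inst S]) (w (apply_view Phi D))%:R%:E * (P D)%:E.
Proof.
move=> P_ge0; rewrite -(esum_fibers (apply_view Phi)); last first.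
  by move=> D; rewrite mule_ge0 ?lee_fin.
apply: eq_esum => D' _; rewrite mule_natl -esumMn; last first.
  by move=> D _; rewrite lee_fin.
by apply: eq_esum => D /= <-; rewrite mule_natl.
Qed.

Lemma poly_moment_lty {R : realType} {S : schema} (p : inst S -> \bar R)
    (C j : nat) :
  (forall D, 0 <= p D) -> \esum_(D in [set: inst S]) p D < +oo ->
  finite_moments p -> (0 < j)%N ->
  \esum_(D in [set: inst S]) (C * (inst_size D ^ j + 1))%:R%:E * p D < +oo.
Proof.
move=> p_ge0 p_fin FM j_gt0.
have moment_ge0 D : 0 <= (inst_size D ^ j)%:R%:E * p D by rewrite mule_ge0.
under eq_esum do
  rewrite natrM natrD EFinM EFinD -muleA mule_natl ge0_muleDl // mul1e.
rewrite esumMn; last by move=> D _; rewrite adde_ge0.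
rewrite esumD // -mule_natl lte_mul_pinfty // lte_add_pinfty //.
exact: FM.
Qed.

Theorem lemma3p5 (R : realType) (S S' : schema)
  (HS : (0 < #|sym S|)%N) (HS' : (0 < #|sym S'|)%N)
  (P : inst S -> R) (HP : is_pdb P) (Phi : fo_view S S') :
  finite_moments (fun D => (P D)%:E) ->
  finite_moments (image_pmf Phi P).
Proof.
move=> FM k _; case: HP => P_ge0 P_sum1.
have [C [j [j_gt0 card_le]]] := card_apply_view_expn_poly Phi k.
rewrite (esum_image_pmf Phi P (fun D => inst_size D ^ k)%N) //.
apply: le_lt_trans (poly_moment_lty _ C j _ _ FM j_gt0); last 2 first.
- by move=> D; rewrite lee_fin.
- by rewrite P_sum1 ltry.
by apply: le_esum => D _; rewrite lee_wpmul2r ?lee_fin ?ler_nat ?card_le.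
Qed.
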